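(* Let $\Gamma$ be an additive subgroup of $\mathbb{R}$ and let $\mu_1,\ldots,\mu_m\in\mathbb{R}$ be such that their classes in $\mathbb{R}/\langle\Gamma\rangle$ are $\mathbb{Q}$-linearly independent. Let $\Gamma'=\langle\Gamma\cup\{\mu_1,\ldots,\mu_m\}\rangle$, so that every $\alpha\in\Gamma'$ can be written uniquely as $\alpha=[\alpha]_\Gamma+\sum_{j=1}^m[\alpha]_{\mu_j}\mu_j$ with $[\alpha]_\Gamma\in\langle\Gamma\rangle$ and $[\alpha]_{\mu_j}\in\mathbb{Q}$. Then for every $j=1,\ldots,m$ there exists a derivation $\mathcal{D}_j$ of $\mathbb{C}((x^{\Gamma'}))$ (a $\mathbb{C}$-linear map satisfying the Leibniz rule) such that \[ \mathcal{D}_j\Big(\sum_{i\ge1}c_ix^{\alpha_i}\Big)=\sum_{i\ge1}c_i[\alpha_i]_{\mu_j}x^{\alpha_i}. \]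
   Context: $\Omega$ denotes the field of generalized power series $\sum_{i\ge1}c_i x^{\mu_i}$ with $c_i\in\mathbb{C}$, $\mu_i\in\mathbb{R}$ strictly increasing and tending to $\infty$ when there are infinitely many terms. For $E\subset\mathbb{R}$, $\langle E\rangle$ is the $\mathbb{Q}$-linear span of $E$ in $\mathbb{R}$. For an additive subgroup $G\subset\mathbb{R}$, $\mathbb{C}((x^{G}))\subset\Omega$ is the subfield of series whose support (set of exponents with non-zero coefficient) is contained in $G$. *)

From HB Require Import structures.
From mathcomp Require Import all_boot all_order all_algebra.
From mathcomp Require Import boolp classical_sets functions cardinality fsbigop reals.
From mathcomp Require Import complex.
Set Implicit Arguments. Unset Strict Implicit. Unset Printing Implicit Defensive.
Import Order.TTheory GRing.Theory Num.Theory.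
Local Open Scope classical_set_scope.
Local Open Scope ring_scope.

(* A (candidate) generalized power series sum c_a x^a is represented by its
   coefficient function c : R -> C (C = R[i]). *)
Notation gps R := (R -> R[i]) (only parsing).

(* Omega: the support is finite or a strictly increasing sequence tending to
   +oo; equivalently every part of the support bounded above is finite. *)
Definition in_Omega (R : realType) (f : R -> R[i]) : Prop :=
  forall M : R, finite_set [set a | f a != 0 /\ a <= M].

Definition supp_in (R : realType) (G : set R) (f : R -> R[i]) : Prop :=
  forall a, f a != 0 -> G a.

Definition CxG (R : realType) (G : set R) (f : R -> R[i]) : Prop :=
  in_Omega f /\ supp_in G f.

(* field operations of Omega (sum and scalar product pointwise; product is the
   Cauchy product, a finite sum for elements of Omega) *)
Definition gps_add (R : realType) (f g : R -> R[i]) : R -> R[i] :=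
  fun a => f a + g a.
Definition gps_scale (R : realType) (c : R[i]) (f : R -> R[i]) : R -> R[i] :=
  fun a => c * f a.
Definition gps_mul (R : realType) (f g : R -> R[i]) : R -> R[i] :=
  fun a => \sum_(b \in [set b | f b != 0 /\ g (a - b) != 0]) f b * g (a - b).

Definition qspan (R : realType) (E : set R) : set R :=
  [set x | exists (n : nat) (v : 'I_n -> R) (q : 'I_n -> rat),
      (forall i, E (v i)) /\ x = \sum_(i < n) ratr (q i) * v i].

Definition derivation_on (R : realType) (G : set R)
    (D : (R -> R[i]) -> (R -> R[i])) : Prop :=
  [/\ forall f, CxG G f -> CxG G (D f),
      forall f g, CxG G f -> CxG G g -> D (gps_add f g) = gps_add (D f) (D g),
      forall c f, CxG G f -> D (gps_scale c f) = gps_scale c (D f) &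
      forall f g, CxG G f -> CxG G g ->
        D (gps_mul f g) = gps_add (gps_mul (D f) g) (gps_mul f (D g))].

From HB Require Import structures.
From mathcomp Require Import all_boot all_order all_algebra.
From mathcomp Require Import boolp classical_sets functions cardinality fsbigop reals.
From mathcomp Require Import complex.
From mathcomp Require Import ring lra.
Set Implicit Arguments. Unset Strict Implicit. Unset Printing Implicit Defensive.
Import Order.TTheory GRing.Theory Num.Theory.
Local Open Scope classical_set_scope.
Local Open Scope ring_scope.

(** By the Q-linear independence of the mu_k modulo <Gamma>, the coefficient
   [a]_(mu_j) is a well-defined additive function on Gamma'.  Multiplying every
   coefficient of a series by an additive weight of its exponent is a
   derivation: in the Cauchy product the exponents b and a - b of each
   contributing pair add up to a, so the weight of a splits as the sum of their
   weights, which is the Leibniz rule coefficientwise. *)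

Section QSpan.
Variables (R : realType) (E : set R).

Lemma qspan0 : qspan E 0.
Proof. by exists 0%N, (fun=> 0), (fun=> 0); split; [case | rewrite big_ord0]. Qed.

Lemma qspan_in v : E v -> qspan E v.
Proof.
move=> Ev; exists 1%N, (fun=> v), (fun=> 1); split => //.
by rewrite big_ord1 rmorph1 mul1r.
Qed.

Lemma qspanD x y : qspan E x -> qspan E y -> qspan E (x + y).
Proof.
move=> [n1 [v1 [q1 [Ev1 ->]]]] [n2 [v2 [q2 [Ev2 ->]]]].
pose glue T (a : 'I_n1 -> T) (b : 'I_n2 -> T) (i : 'I_(n1 + n2)) :=
  match fintype.split i with inl k => a k | inr k => b k end.
exists (n1 + n2)%N, (glue _ v1 v2), (glue _ q1 q2); split.
  by move=> i; rewrite /glue; case: (fintype.split i).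
rewrite big_split_ord /glue; congr (_ + _); apply: eq_bigr => i _.
  by rewrite (unsplitK (inl _ i)).
by rewrite (unsplitK (inr _ i)).
Qed.

Lemma qspanZ r x : qspan E x -> qspan E (ratr r * x).
Proof.
move=> [n [v [q [Ev ->]]]]; exists n, v, (fun i => r * q i); split => //.
by rewrite mulr_sumr; apply: eq_bigr => i _; rewrite rmorphM mulrA.
Qed.

Lemma qspanB x y : qspan E x -> qspan E y -> qspan E (x - y).
Proof.
move=> Ex /(qspanZ (-1)); rewrite rmorphN rmorph1 mulN1r.
exact: qspanD.
Qed.

Lemma qspan_ind (P : R -> Prop) :
  P 0 -> (forall x y, P x -> P y -> P (x + y)) ->
  (forall r v, E v -> P (ratr r * v)) ->
  forall x, qspan E x -> P x.
Proof.
move=> P0 PD PZ _ [n [v [q [Ev ->]]]].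
elim: n v q Ev => [|n IHn] v q Ev; first by rewrite big_ord0.
rewrite big_ord_recr /=; apply: PD; last exact: PZ.
exact: (IHn (fun i => v (widen_ord (leqnSn n) i))).
Qed.

End QSpan.

Lemma finite_set_lbound (R : realDomainType) (S : set R) :
  finite_set S -> exists L, forall x, S x -> L <= x.
Proof.
move=> /finite_seqP[s ->]; elim: s => [|y s [L HL]]; first by exists 0.
exists (Order.min y L) => x /=; rewrite inE => /orP[/eqP -> | /HL xL].
  by rewrite ge_min lexx.
by rewrite ge_min xL orbT.
Qed.

Lemma in_Omega_lbound (R : realType) (f : R -> R[i]) :
  in_Omega f -> exists L, forall a, f a != 0 -> L <= a.
Proof.
move=> /(_ 0) /finite_set_lbound[L HL]; exists (Order.min L 0) => a fa.
have [a_le0 | a_gt0] := leP a 0; first by rewrite ge_min HL.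
by rewrite ge_min (ltW a_gt0) orbT.
Qed.

Section WeightDerivation.
Variable R : realType.
Implicit Types (f g : R -> R[i]) (w : R -> R[i]).

Definition gps_weight w f : R -> R[i] := fun a => w a * f a.

Lemma gps_weight_neq0 w f a : gps_weight w f a != 0 -> f a != 0.
Proof. by rewrite /gps_weight; apply: contraNneq => ->; rewrite mulr0. Qed.

Lemma CxG_weight (G : set R) w f : CxG G f -> CxG G (gps_weight w f).
Proof.
move=> [fO fG]; split => [M | a /gps_weight_neq0 /fG //].
by apply: sub_finite_set (fO M) => a /= [/gps_weight_neq0].
Qed.

Lemma gps_mul_support_finite f g a :
  in_Omega f -> in_Omega g -> finite_set [set b | f b != 0 /\ g (a - b) != 0].
Proof.
move=> fO /in_Omega_lbound[L HL].
apply: sub_finite_set (fO (a - L)) => b /= [fb gb]; split => //.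
by have := HL _ gb; lra.
Qed.

Lemma gps_mul_widen f g f' g' a :
  (forall b, f' b != 0 -> f b != 0) -> (forall b, g' b != 0 -> g b != 0) ->
  gps_mul f' g' a =
  \sum_(b \in [set b | f b != 0 /\ g (a - b) != 0]) f' b * g' (a - b).
Proof.
move=> f'f g'g; apply: fsbig_widen => [b /= [/f'f fb /g'g gb] // | b /= []].
move=> [fb gb] /not_andP nz; apply/eqP; rewrite mulf_eq0.
by case: nz => /negP; rewrite negbK => ->; rewrite ?orbT.
Qed.

Lemma gps_weight_derivation (G : set R) w :
  (forall x y, G x -> G y -> w (x + y) = w x + w y) ->
  derivation_on G (gps_weight w).
Proof.
move=> wD; split=> [f | f g _ _ | c f _ | f g [fO fG] [gO gG]].
- exact: CxG_weight.
- by apply/funext => a; rewrite /gps_weight /gps_add mulrDr.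
- by apply/funext => a; rewrite /gps_weight /gps_scale mulrCA.
apply/funext => a; rewrite /gps_add.
rewrite !(@gps_mul_widen f g) //; try exact: gps_weight_neq0.
rewrite -fsbig_split; last exact: gps_mul_support_finite.
rewrite /gps_weight /gps_mul mulr_fsumr.
apply: eq_fsbigr => b; rewrite inE => -[/fG Gb /gG Gab].
have -> : w a = w b + w (a - b) by rewrite -wD // addrC subrK.
rewrite /=; ring.
Qed.

End WeightDerivation.

Section MuCoordinates.
Variables (R : realType) (Gamma : set R) (m : nat) (mu : 'I_m -> R).
Hypothesis indep : forall q : 'I_m -> rat,
  qspan Gamma (\sum_(k < m) ratr (q k) * mu k) -> forall k, q k = 0.

Definition mu_decomposition (x g : R) (q : 'I_m -> rat) :=
  qspan Gamma g /\ x = g + \sum_(k < m) ratr (q k) * mu k.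

Lemma mu_decomposition_uniq x g1 q1 g2 q2 :
  mu_decomposition x g1 q1 -> mu_decomposition x g2 q2 -> q1 =1 q2.
Proof.
move=> [Gg1 x1] [Gg2 x2] k; apply/eqP; rewrite -subr_eq0; apply/eqP.
apply: (indep (q := fun k => q1 k - q2 k)).
have -> : \sum_(k < m) ratr (q1 k - q2 k) * mu k = g2 - g1.
  under eq_bigr do rewrite rmorphB mulrBl.
  by rewrite sumrB; move: x1 x2 => ->; lra.
exact: qspanB.
Qed.

Lemma mu_decompositionD x g1 q1 y g2 q2 :
  mu_decomposition x g1 q1 -> mu_decomposition y g2 q2 ->
  mu_decomposition (x + y) (g1 + g2) (fun k => q1 k + q2 k).
Proof.
move=> [Gg1 ->] [Gg2 ->]; split; first exact: qspanD.
under [in RHS]eq_bigr do rewrite rmorphD mulrDl.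
by rewrite big_split /=; ring.
Qed.

Lemma mu_decomposition_exists x :
  qspan (Gamma `|` range mu) x -> exists g q, mu_decomposition x g q.
Proof.
have zero_coord g : g = g + \sum_(k < m) ratr (0 : rat) * mu k.
  by rewrite big1 ?addr0 // => k _; rewrite rmorph0 mul0r.
move: x; apply: (@qspan_ind _ _ (fun x => exists g q, mu_decomposition x g q))
  => [|x y [g1 [q1 dx]] [g2 [q2 dy]] | r v [Gv | [k _ <-]]].
- by exists 0, (fun=> 0); split; [exact: qspan0 | exact: zero_coord].
- by exists (g1 + g2), (fun k => q1 k + q2 k); exact: mu_decompositionD.
- exists (ratr r * v), (fun=> 0); split; last exact: zero_coord.
  exact/qspanZ/qspan_in.
exists 0, (fun i => if i == k then r else 0); split; first exact: qspan0.
rewrite add0r (bigD1 k) //= eqxx big1 ?addr0 // => i /negPf ->.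
by rewrite rmorph0 mul0r.
Qed.

(* Outside Gamma' the predicate below is empty and mu_coord is 0. *)
Definition mu_coord (j : 'I_m) (x : R) : rat :=
  xget 0 [set r | exists g q, mu_decomposition x g q /\ q j = r].

Lemma mu_coordE j x g q : mu_decomposition x g q -> mu_coord j x = q j.
Proof.
move=> dx; apply: xget_unique => [|_ [g' [q' [dx' <-]]]]; first by exists g, q.
exact: mu_decomposition_uniq dx' dx j.
Qed.

Lemma mu_coordD j x y :
  qspan (Gamma `|` range mu) x -> qspan (Gamma `|` range mu) y ->
  mu_coord j (x + y) = mu_coord j x + mu_coord j y.
Proof.
move=> /mu_decomposition_exists[g1 [q1 dx]] /mu_decomposition_exists[g2 [q2 dy]].
rewrite (mu_coordE j (mu_decompositionD dx dy)).
by rewrite (mu_coordE j dx) (mu_coordE j dy).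
Qed.

End MuCoordinates.

Theorem lemma1 (R : realType) (Gamma : set R)
  (Gamma0 : Gamma 0)
  (GammaB : forall x y, Gamma x -> Gamma y -> Gamma (x - y))
  (m : nat) (mu : 'I_m -> R)
  (indep : forall q : 'I_m -> rat,
      qspan Gamma (\sum_(k < m) ratr (q k) * mu k) -> forall k, q k = 0) :
  let Gamma' := qspan (Gamma `|` range mu) in
  forall j : 'I_m,
  exists D : (R -> R[i]) -> (R -> R[i]),
    derivation_on Gamma' D /\
    forall f, CxG Gamma' f ->
      forall (alpha g : R) (q : 'I_m -> rat),
        qspan Gamma g -> alpha = g + \sum_(k < m) ratr (q k) * mu k ->
        D f alpha = ratr (q j) * f alpha.
Proof.
move=> Gamma' j.
exists (gps_weight (fun a => ratr (mu_coord Gamma mu j a))); split.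
  apply: gps_weight_derivation => x y Gx Gy.
  by rewrite (mu_coordD indep) // rmorphD.
move=> f _ alpha g q Gg dalpha.
by rewrite /gps_weight (mu_coordE indep j (conj Gg dalpha)).
Qed.
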